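(* Let $D=\mathrm{diag}(1,-1,1,-1,\ldots)=(1,-x)$, $\mathbb{F}^{\rm S}=(1,x(1+x))$, $\mathbb{L}^{\rm S}=(1+2x,x(1+x))$, and write $D(\mathbb{F}^{\rm S})^{-1}D=[r_{ij}]_{i,j\ge0}$ and $D(\mathbb{L}^{\rm S})^{-1}D=[q_{ij}]_{i,j\ge0}$. Then: (a) $r_{00}=1$, and for $i=1,2,\ldots$ and $j=2,3,\ldots$: $r_{i0}=0$, $r_{i1}=\frac{1}{i}\binom{2i-2}{i-1}$, and $r_{ij}=-r_{i-1,j-2}+r_{i,j-1}$. (b) $q_{i0}=\binom{2i}{i}$ for $i=0,1,2,\ldots$; $q_{i1}=\frac12\binom{2i}{i}$ for $i=1,2,\ldots$; and $q_{ij}=-q_{i-1,j-2}+q_{i,j-1}$ for $i=1,2,\ldots$, $j=2,3,\ldots$.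
   Context: All matrices are infinite with rows and columns indexed by $0,1,2,\ldots$. For formal power series $g(x)=g_0+g_1x+\cdots$ with $g_0\ne0$ and $f(x)=f_1x+f_2x^2+\cdots$ with $f_1\ne0$, $(g(x),f(x))$ denotes the (Riordan) infinite lower triangular matrix whose $j$-th column has generating function $g(x)f(x)^j$. These matrices form a group under matrix multiplication with $(g,f)(h,l)=(g\cdot h(f),l(f))$. *)

From HB Require Import structures.
From mathcomp Require Import all_boot all_order all_algebra.
Set Implicit Arguments. Unset Strict Implicit. Unset Printing Implicit Defensive.
Import Order.TTheory GRing.Theory Num.Theory.
Local Open Scope ring_scope.

Definition imx := nat -> nat -> rat.

Definition lower_tri (A : imx) : Prop := forall i j, (i < j)%N -> A i j = 0.

(* Product of infinite matrices whose left factor is lower triangular: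
   (AB)_{ij} = sum_{k} A_{ik} B_{kj} = sum_{k <= i} A_{ik} B_{kj}. *)
Definition imul (A B : imx) : imx := fun i j => \sum_(k < i.+1) A i k * B k j.

Definition iid : imx := fun i j => (i == j)%:R.

(* Riordan array (g, f): column j has generating function g f^j.
   All series in the statement are polynomials. *)
Definition riordan (g f : {poly rat}) : imx := fun i j => (g * f ^+ j)`_i.

Definition is_inverse (A B : imx) : Prop :=
  lower_tri B /\ (forall i j, imul A B i j = iid i j) /\ (forall i j, imul B A i j = iid i j).

Definition Dmx : imx := riordan 1 (- 'X).
Definition FS : imx := riordan 1 ('X * (1 + 'X)).
Definition LS : imx := riordan (1 + 2%:R *: 'X) ('X * (1 + 'X)).

(* Both F^S and L^S are Riordan arrays (g, x(1+x)) with g = 1 + a x, where a = 0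
   resp. a = 2.  Since column j+1 of such an array A is column j multiplied by
   x + x^2, its inverse B satisfies B(i+1,j+1) + B(i+1,j+2) = B(i,j), while
   B A = I forces B(i+1,0) + a B(i+1,1) = 0.  Conjugating by D turns this into
   M(i+1,j+1) = M(i,j) + M(i+1,j+2) and M(i+1,0) = a M(i+1,1), which together
   with M(0,0) = 1 and lower triangularity determine M row by row, each row from
   right to left.  The array C(2i-j, i) solves this system for a = 2, and
   C(2i-j, i) - 2 C(2i-j-1, i) solves it for a = 0; column 1 of the latter
   consists of Catalan numbers. *)

From mathcomp Require Import all_boot all_order all_algebra.
From mathcomp Require Import zify ring.
Set Implicit Arguments. Unset Strict Implicit. Unset Printing Implicit Defensive.
Import GRing.Theory Num.Theory.
Local Open Scope ring_scope.

Lemma imulE (A B : imx) i j : imul A B i j = \sum_(0 <= k < i.+1) A i k * B k j.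
Proof. by rewrite /imul big_mkord. Qed.

Lemma imul_diagl (A B : imx) i j :
  (forall k, (k < i)%N -> A i k = 0) -> imul A B i j = A i i * B i j.
Proof.
by move=> A0; rewrite /imul big_ord_recr /= big1 ?add0r // => k _; rewrite A0 ?mul0r.
Qed.

Lemma imul_diagr (A B : imx) i j : lower_tri A ->
  (forall k, k != j -> B k j = 0) -> imul A B i j = A i j * B j j.
Proof.
move=> lA B0; case: (leqP j i) => [le_ji | lt_ij].
  rewrite /imul (bigD1 (Ordinal (le_ji : (j < i.+1)%N))) //= big1 ?addr0 // => k kj.
  by rewrite B0 ?mulr0 //; apply: contraNneq kj => e; apply/eqP/val_inj.
rewrite (lA _ _ lt_ij) mul0r /imul big1 // => k _; rewrite B0 ?mulr0 //.
by rewrite neq_ltn (leq_trans _ lt_ij) ?ltn_ord.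
Qed.

Lemma DmxE i j : Dmx i j = (-1) ^+ j * (i == j)%:R.
Proof.
have e : (-1 : {poly rat}) ^+ j = ((-1) ^+ j)%:P by rewrite rmorphXn /= polyCN polyC1.
by rewrite /Dmx /riordan mul1r [(- 'X) ^+ j]exprNn e coefCM coefXn.
Qed.

Definition signed (B : imx) : imx := fun i j => (-1) ^+ (i + j) * B i j.

Lemma Dmx_conj (B : imx) i j :
  lower_tri B -> imul (imul Dmx B) Dmx i j = signed B i j.
Proof.
have DB k l : imul Dmx B k l = (-1) ^+ k * B k l.
  rewrite imul_diagl => [|m lt_mk]; first by rewrite DmxE eqxx mulr1.
  by rewrite DmxE gtn_eqF ?mulr0.
move=> lB; rewrite imul_diagr => [|k l kl|k /negbTE kj]; last first.
- by rewrite DmxE kj mulr0.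
- by rewrite DB lB ?mulr0.
by rewrite DB DmxE eqxx mulr1 /signed exprD; ring.
Qed.

Lemma unitri_kernel (A : imx) (w : nat -> rat) : (forall i, A i i = 1) ->
  (forall m, \sum_(0 <= k < m.+1) A m k * w k = 0) -> forall k, w k = 0.
Proof.
move=> A1 Aw; elim/ltn_ind=> k IH; have := Aw k.
rewrite big_nat_recr //= A1 mul1r big_nat_cond big1 ?add0r //.
by move=> i /andP[/andP[_ lt_ik] _]; rewrite IH ?mulr0.
Qed.

Section InverseRecurrence.
Variables A B : imx.
Hypotheses (A_lower : lower_tri A) (A_diag : forall i, A i i = 1)
  (A_row1 : forall j, A 1%N j.+1 = A 0%N j)
  (A_rec : forall i j, A i.+2 j.+1 = A i.+1 j + A i j)
  (AB : forall i j, imul A B i j = iid i j).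

Let Bup j k := if k is k'.+1 then B k' j else 0.

Lemma imul_Bup m j :
  \sum_(0 <= k < m.+1) A m k * Bup j k = (m == j.+1)%:R + (m == j.+2)%:R.
Proof.
rewrite big_nat_recl // mulr0 add0r; case: m => [|[|m]].
- by rewrite big_geq ?addr0.
- have := AB 0%N j; rewrite imulE big_nat1 /iid.
  by rewrite big_nat1 A_row1 /= addr0.
under eq_bigr => k _ do rewrite /= A_rec mulrDl.
rewrite big_split /= -imulE AB big_nat_recr //= (A_lower (ltnSn m)) mul0r addr0.
by rewrite -imulE AB /iid !eqSS.
Qed.

(* A w = 0 for w := B(., j+1) + B(., j+2) - Bup j, since column j+1 of A is
   column j multiplied by x + x^2. *)
Lemma inverse_rec j k : B k j.+1 + B k j.+2 = Bup j k.
Proof.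
apply/eqP; rewrite -subr_eq0; apply/eqP; move: k; apply: unitri_kernel => // m.
under eq_bigr => k _ do rewrite mulrBr mulrDr.
by rewrite sumrB big_split /= -!imulE !AB imul_Bup subrr.
Qed.

End InverseRecurrence.

Section RiordanXPlusXsq.
Variable g : {poly rat}.
Let f : {poly rat} := 'X * (1 + 'X).

Lemma riordan_lower : lower_tri (riordan g f).
Proof. by move=> i j lt_ij; rewrite /riordan /f exprMn mulrCA mulrC coefMXn lt_ij. Qed.

Lemma riordan_diag : g`_0 = 1 -> forall i, riordan g f i i = 1.
Proof.
move=> g0 i; rewrite /riordan /f exprMn mulrCA mulrC coefMXn ltnn subnn coef0M g0 mul1r.
by rewrite -horner_coef0 horner_exp !hornerE expr1n.
Qed.

Lemma riordan_col0 k : riordan g f k 0%N = g`_k.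
Proof. by rewrite /riordan mulr1. Qed.

Lemma riordan_row1 j : riordan g f 1%N j.+1 = riordan g f 0%N j.
Proof. by rewrite /riordan exprSr mulrA /f mulrA mulrDr mulr1 coefD !coefMX /= addr0. Qed.

Lemma riordan_rec i j :
  riordan g f i.+2 j.+1 = riordan g f i.+1 j + riordan g f i j.
Proof. by rewrite /riordan exprSr mulrA /f mulrA mulrDr mulr1 coefD !coefMX. Qed.

End RiordanXPlusXsq.

Definition rec_array (a : rat) (M : imx) : Prop :=
  [/\ lower_tri M, M 0%N 0%N = 1,
      forall i j, M i.+1 j.+1 = M i j + M i.+1 j.+2
    & forall i, M i.+1 0%N = a * M i.+1 1%N].

Lemma signed_inverse_rec_array (a : rat) (B : imx) :
  is_inverse (riordan (1 + a *: 'X) ('X * (1 + 'X))) B -> rec_array a (signed B).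
Proof.
set A := riordan _ _; case=> lB [AB BA].
have g0 : (1 + a *: 'X)`_0 = 1 by rewrite coefD coef1 coefZ coefX mulr0 addr0.
have A_col0 k : A k 0%N = (k == 0%N)%:R + a * (k == 1%N)%:R.
  by rewrite /A riordan_col0 coefD coef1 coefZ coefX.
have A_diag : forall i, A i i = 1 := riordan_diag g0.
have B_rec :=
  inverse_rec (@riordan_lower _) A_diag (@riordan_row1 _) (@riordan_rec _) AB.
split=> [i j lt_ij | | i j | i].
- by rewrite /signed lB ?mulr0.
- by have := BA 0%N 0%N; rewrite imulE big_nat1 A_diag mulr1 /signed mul1r.
- by rewrite /signed -(B_rec j i.+1) !addSn !addnS !exprS; ring.
have B_col0 : B i.+1 0%N = - (a * B i.+1 1%N).
  apply/eqP; rewrite -addr_eq0 mulrC; apply/eqP; have := BA i.+1 0%N.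
  rewrite imulE !big_nat_recl // big1_seq => [|k _]; last by rewrite A_col0 mulr0 add0r mulr0.
  by rewrite !A_col0 /= !(mulr0, mulr1, addr0, add0r).
by rewrite /signed B_col0 !addn0 !addn1 !exprS; ring.
Qed.

Lemma rec_array_unique (a : rat) (M N : imx) :
  rec_array a M -> rec_array a N -> forall i j, M i j = N i j.
Proof.
case=> lM M00 M_rec M_col0 [lN N00 N_rec N_col0]; elim=> [|i IHi].
  by case=> [|j]; [rewrite M00 N00 | rewrite lM // lN].
suff M_N j : M i.+1 j.+1 = N i.+1 j.+1 by case=> [|j]; rewrite ?M_col0 ?N_col0 M_N.
have [n] := ubnP (i.+1 - j); elim: n j => [//|n IHn] j.
rewrite ltnS; case: (ltnP i.+1 j.+1) => [lt_ij _ | le_ji le_n].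
  by rewrite lM ?lN.
by rewrite M_rec N_rec IHi IHn //; lia.
Qed.

Lemma rec_array_shift (M : imx) :
  (forall i j, M i.+1 j.+1 = M i j + M i.+1 j.+2) ->
  forall i j, (0 < i)%N -> (2 <= j)%N -> M i j = - M i.-1 (j - 2)%N + M i j.-1.
Proof. by move=> M_rec [|i] [|[|j]] // _ _; rewrite /= subn2 /= (M_rec i j); ring. Qed.

Definition binom_array (i j : nat) : rat :=
  if (j <= i)%N then ('C(2 * i - j, i))%:R else 0.

Definition ballot_array (i j : nat) : rat :=
  binom_array i j - 2%:R * binom_array i j.+1.

Lemma binom_array_col0 i : binom_array i 0%N = ('C(2 * i, i))%:R.
Proof. by rewrite /binom_array subn0. Qed.

Lemma binom_array_rec_array : rec_array 2%:R binom_array.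
Proof.
split=> [i j lt_ij | | i j | i]; rewrite /binom_array.
- by rewrite leqNgt lt_ij.
- by rewrite bin0.
- rewrite !ltnS; case: (ltngtP j i) => [lt_ji | // | ->].
    have -> : (2 * i.+1 - j.+1 = (2 * i - j).+1)%N by lia.
    have -> : (2 * i.+1 - j.+2 = 2 * i - j)%N by lia.
    by rewrite binS natrD addrC.
  have -> : (2 * i.+1 - i.+1 = i.+1)%N by lia.
  have -> : (2 * i - i = i)%N by lia.
  by rewrite !binn addr0.
have -> : (2 * i.+1 = (2 * i).+2)%N by lia.
rewrite subn0 subn1 /= binS.
have -> : 'C((2 * i).+1, i) = 'C((2 * i).+1, i.+1).
  by rewrite -bin_sub; [congr 'C(_, _); lia | lia].
by rewrite addnn -mul2n natrM.
Qed.

Lemma ballot_array_rec_array : rec_array 0 ballot_array.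
Proof.
have [b_lower b00 b_rec b_col0] := binom_array_rec_array.
split=> [i j lt_ij | | i j | i]; rewrite /ballot_array.
- by rewrite !b_lower ?mulr0 ?subr0 // ltnW.
- by rewrite b00 b_lower ?mulr0 ?subr0.
- by rewrite (b_rec i j) (b_rec i j.+1); ring.
by rewrite b_col0 subrr mul0r.
Qed.

Lemma ballot_array_col1 i :
  ballot_array i.+1 1%N = (i.+1%:R)^-1 * ('C(2 * i, i))%:R.
Proof.
rewrite /ballot_array /binom_array !ltnS leq0n.
have -> : (2 * i.+1 - 1 = (2 * i).+1)%N by lia.
have -> : (2 * i.+1 - 2 = 2 * i)%N by lia.
have -> : (if (0 < i)%N then 'C(2 * i, i.+1)%:R else 0) = 'C(2 * i, i.+1)%:R :> rat.
  by case: i.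
have i1_neq0 : i.+1%:R != 0 :> rat by rewrite pnatr_eq0.
have bin_ratio : 'C(2 * i, i.+1)%:R = i%:R / i.+1%:R * 'C(2 * i, i)%:R :> rat.
  apply: (mulfI i1_neq0); rewrite -natrM mul_bin_left.
  have -> : (2 * i - i = i)%N by lia.
  by rewrite natrM; field; rewrite nat1r.
by rewrite binS natrD bin_ratio; field; rewrite nat1r.
Qed.

Theorem theorem3p2 (Finv Linv : imx) :
  is_inverse FS Finv -> is_inverse LS Linv ->
  let r := imul (imul Dmx Finv) Dmx in
  let q := imul (imul Dmx Linv) Dmx in
  (r 0%N 0%N = 1 /\
   (forall i, (0 < i)%N -> r i 0%N = 0) /\
   (forall i, (0 < i)%N -> r i 1%N = (i%:R)^-1 * ('C(2 * i - 2, i - 1))%:R) /\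
   (forall i j, (0 < i)%N -> (2 <= j)%N -> r i j = - r i.-1 (j - 2)%N + r i j.-1))
  /\
  ((forall i, q i 0%N = ('C(2 * i, i))%:R) /\
   (forall i, (0 < i)%N -> q i 1%N = 2%:R^-1 * ('C(2 * i, i))%:R) /\
   (forall i j, (0 < i)%N -> (2 <= j)%N -> q i j = - q i.-1 (j - 2)%N + q i j.-1)).
Proof.
move=> invF invL r q.
have {}invF : is_inverse (riordan (1 + 0 *: 'X) ('X * (1 + 'X))) Finv.
  by rewrite scale0r addr0.
have {}invL : is_inverse (riordan (1 + 2%:R *: 'X) ('X * (1 + 'X))) Linv := invL.
have r_ballot i j : r i j = ballot_array i j.
  rewrite /r Dmx_conj; last by case: invF.
  exact (rec_array_unique (signed_inverse_rec_array invF) ballot_array_rec_array i j).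
have q_binom i j : q i j = binom_array i j.
  rewrite /q Dmx_conj; last by case: invL.
  exact (rec_array_unique (signed_inverse_rec_array invL) binom_array_rec_array i j).
have [_ r00 r_rec r_col0] := ballot_array_rec_array.
have [_ _ q_rec q_col0] := binom_array_rec_array.
split; split.
- by rewrite r_ballot r00.
- split=> [[|i] // _ | ]; first by rewrite r_ballot r_col0 mul0r.
  split=> [[|i] // _ | i j i_gt0 j_ge2].
    have -> : (2 * i.+1 - 2 = 2 * i)%N by lia.
    by rewrite r_ballot ballot_array_col1 subn1.
  by rewrite !r_ballot; exact: (rec_array_shift r_rec i_gt0 j_ge2).
- by move=> i; rewrite q_binom binom_array_col0.
split=> [[|i] // _ | i j i_gt0 j_ge2].
  by rewrite q_binom -binom_array_col0 q_col0 mulrA mulVf ?mul1r // pnatr_eq0.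
by rewrite !q_binom; exact: (rec_array_shift q_rec i_gt0 j_ge2).
Qed.
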